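(* Let $F$ be a Banach lattice, $\tau$ a linear topology on $F$ weaker than the norm topology, $E\subset F$ a closed sublattice, and $\pi$ a linear topology on $E$ with the Kadec-Pelczynski property (relative to the Banach lattice $E$). Suppose there is a linear map $T:F\to E$ which is $\tau$-to-$\pi$ continuous and such that $\mathrm{Id}_F-T$ is $\tau$-to-norm continuous. Then $\tau$ has the Kadec-Pelczynski property.
   Context: For a Banach lattice $G$ with unit sphere $\mathrm{S}_G$, a sequence $(e_n)$ is almost disjoint if there is a disjoint sequence $(g_n)\subset G$ ($|g_n|\wedge|g_m|=0$, $n\ne m$) with $\|e_n-g_n\|\to0$. A linear topology $\sigma$ on $G$ has the Kadec-Pelczynski property if whenever $(f_p)_{p\in P}\subset\mathrm{S}_G$ is a $\sigma$-null net and $(q_n)_{n\in\mathbb{N}}\subset P$, there are $p_n\in P$ with $p_n\ge q_n$ for all $n$ such that $(f_{p_n})_n$ is almost disjoint. *)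

From HB Require Import structures.
From mathcomp Require Import all_boot all_order all_algebra.
From mathcomp Require Import all_classical all_reals topology normedtype sequences.
Set Implicit Arguments. Unset Strict Implicit. Unset Printing Implicit Defensive.
Import Order.TTheory GRing.Theory Num.Theory.
Import numFieldNormedType.Exports.
Local Open Scope classical_set_scope.
Local Open Scope ring_scope.

Section BanachLattice.
Variables (R : realType) (V : normedModType R) (join : V -> V -> V).

Definition lle (x y : V) : Prop := join x y = y.
Definition lmeet (x y : V) : V := - join (- x) (- y).
Definition labs (x : V) : V := join x (- x).

(* Together
   with completeness of V (a [completeNormedModType]) this is a Banach lattice. *)
Record is_banach_lattice : Prop := {
  bl_joinC : forall x y, join x y = join y x;
  bl_joinA : forall x y z, join x (join y z) = join (join x y) z;
  bl_joinxx : forall x, join x x = x;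
  bl_add : forall x y z, lle x y -> lle (x + z) (y + z);
  bl_scale : forall (c : R) x y, 0 <= c -> lle x y -> lle (c *: x) (c *: y);
  bl_norm : forall x y, lle (labs x) (labs y) -> `|x| <= `|y| }.

Record linear_topology (sigma : set (set V)) : Prop := {
  lt_setT : sigma setT;
  lt_setI : forall U W, sigma U -> sigma W -> sigma (U `&` W);
  lt_bigcup : forall (I : Type) (U : I -> set V),
      (forall i, sigma (U i)) -> sigma (\bigcup_i U i);
  lt_add : forall x y W, sigma W -> W (x + y) ->
      exists U1 U2, [/\ sigma U1, sigma U2, U1 x, U2 y &
                        forall u1 u2, U1 u1 -> U2 u2 -> W (u1 + u2)];
  lt_scale : forall (c : R) x W, sigma W -> W (c *: x) ->
      exists d : R, 0 < d /\ exists U, [/\ sigma U, U x &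
         forall (c' : R) u, `|c' - c| < d -> U u -> W (c' *: u)] }.

Definition directed (P : Type) (le : P -> P -> Prop) : Prop :=
  (forall p, le p p) /\ (forall p q r, le p q -> le q r -> le p r) /\
  (forall p q, exists r, le p r /\ le q r).

Definition net_null (sigma : set (set V)) (P : Type) (le : P -> P -> Prop)
    (f : P -> V) : Prop :=
  forall U, sigma U -> U 0 -> exists p0, forall p, le p0 p -> U (f p).

Definition disjoint_seq (g : nat -> V) : Prop :=
  forall n m, n <> m -> lmeet (labs (g n)) (labs (g m)) = 0.

Definition almost_disjoint (e : nat -> V) : Prop :=
  exists g : nat -> V, disjoint_seq g /\ (fun n => `|e n - g n|) @ \oo --> (0 : R).

Definition KP_property (sigma : set (set V)) : Prop :=
  forall (P : Type) (le : P -> P -> Prop) (f : P -> V),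
    directed le -> (forall p, `|f p| = 1) -> net_null sigma le f ->
    forall q : nat -> P, exists p : nat -> P,
      (forall n, le (q n) (p n)) /\ almost_disjoint (fun n => f (p n)).

End BanachLattice.

From mathcomp Require Import all_boot all_order all_algebra.
From mathcomp Require Import all_classical all_reals topology normedtype sequences.
From mathcomp Require Import lra.
Import Order.TTheory GRing.Theory Num.Theory.
Import numFieldNormedType.Exports.
Local Open Scope classical_set_scope.
Local Open Scope ring_scope.

Set Implicit Arguments.
Unset Strict Implicit.
Unset Printing Implicit Defensive.

(* Let (f_p) be a tau-null net on the unit sphere of F and put
   N_p := f_p - j (T f_p).  Since Id - jT is tau-to-norm continuous, N is
   norm-null, so T f_p is a pi-null net whose norms tend to 1 (j is
   isometric); normalizing it gives a pi-null net on the sphere of E.  The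
   Kadec-Pelczynski property of pi yields indices p_n >= q_n, taken late enough
   that |N_{p_n}| < 1/(n+1), and a disjoint (g_n) close to the normalized
   T f_{p_n}; then (j g_n) is disjoint in F and close to f_{p_n}. *)

Section LinearMaps.
Variables (R : numDomainType) (U V : normedModType R) (h : U -> V).
Hypothesis h_add : forall x y, h (x + y) = h x + h y.
Hypothesis h_scale : forall (c : R) x, h (c *: x) = c *: h x.

Lemma scalable0 : h 0 = 0.
Proof. by rewrite -(scale0r (0 : U)) h_scale scale0r. Qed.

Lemma scalableN x : h (- x) = - h x.
Proof. by rewrite -scaleN1r h_scale scaleN1r. Qed.

Lemma linearB x y : h (x - y) = h x - h y.
Proof. by rewrite h_add scalableN. Qed.

Lemma isometry_dist (h_norm : forall x, `|h x| = `|x|) x y :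
  `|h x - h y| = `|x - y|.
Proof. by rewrite -linearB h_norm. Qed.

End LinearMaps.

Section LatticeEmbedding.
Variables (R : realType) (E F : normedModType R).
Variables (joinE : E -> E -> E) (joinF : F -> F -> F) (j : E -> F).
Hypothesis j_scale : forall (c : R) x, j (c *: x) = c *: j x.
Hypothesis j_join : forall x y, j (joinE x y) = joinF (j x) (j y).

Lemma lmeet_labs_morph x y :
  j (lmeet joinE (labs joinE x) (labs joinE y)) =
  lmeet joinF (labs joinF (j x)) (labs joinF (j y)).
Proof. by rewrite /lmeet /labs !(scalableN j_scale, j_join). Qed.

Lemma disjoint_seq_comp g : disjoint_seq joinE g -> disjoint_seq joinF (j \o g).
Proof.
by move=> dg n m nm; rewrite /= -lmeet_labs_morph dg // (scalable0 j_scale).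
Qed.

End LatticeEmbedding.

Section Nets.
Variables (R : realType) (P : Type) (le : P -> P -> Prop).
Hypothesis le_directed : directed le.

Definition net_eventually (A : P -> Prop) : Prop :=
  exists p0, forall p, le p0 p -> A p.

Definition net_norm_null (V : normedModType R) (f : P -> V) : Prop :=
  forall e : R, 0 < e -> net_eventually (fun p => `|f p| < e).

Lemma net_eventually_mono (A B : P -> Prop) :
  (forall p, A p -> B p) -> net_eventually A -> net_eventually B.
Proof. by move=> AB [p0 Ap0]; exists p0 => p /Ap0/AB. Qed.

Lemma net_eventually_and (A B : P -> Prop) :
  net_eventually A -> net_eventually B -> net_eventually (fun p => A p /\ B p).
Proof.
case: le_directed => _ [leP_trans leP_ub] [pA hA] [pB hB].
have [r [pAr pBr]] := leP_ub pA pB.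
by exists r => p rp; split; [apply: hA | apply: hB]; apply: leP_trans rp.
Qed.

Lemma net_null_comp (V W : normedModType R) (sigma : set (set V))
    (sigma' : set (set W)) (S : V -> W) (f : P -> V) :
  S 0 = 0 -> (forall U, sigma' U -> sigma (S @^-1` U)) ->
  net_null sigma le f -> net_null sigma' le (S \o f).
Proof.
by move=> S0 S_cont f0 U /S_cont sU U0; apply: (f0 _ sU); rewrite /preimage /= S0.
Qed.

Lemma net_null_norm_null (V W : normedModType R) (sigma : set (set V))
    (S : V -> W) (f : P -> V) :
  S 0 = 0 -> (forall U : set W, open U -> sigma (S @^-1` U)) ->
  net_null sigma le f -> net_norm_null (S \o f).
Proof.
move=> S0 S_cont f0 e e0.
have S_ball0 : (S @^-1` ball (0 : W) e) 0 by rewrite /preimage /= S0; exact: ballxx.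
have [p0 hp0] := f0 _ (S_cont _ (ball_open (0 : W) e)) S_ball0.
by exists p0 => p /hp0; rewrite /preimage /= -ball_normE /= sub0r normrN.
Qed.

Lemma net_null_eq (V : normedModType R) (sigma : set (set V)) (x y : P -> V) :
  net_eventually (fun p => y p = x p) -> net_null sigma le x -> net_null sigma le y.
Proof.
move=> xy x0 U sU U0.
by apply: net_eventually_mono (net_eventually_and xy (x0 U sU U0)) => p [->].
Qed.

Lemma net_null_scale (V : normedModType R) (sigma : set (set V))
    (c : P -> R) (c0 : R) (x : P -> V) :
  linear_topology sigma ->
  (forall d, 0 < d -> net_eventually (fun p => `|c p - c0| < d)) ->
  net_null sigma le x -> net_null sigma le (fun p => c p *: x p).
Proof.
move=> lin_sigma cc0 x0 U sU U0.
have [d [d0 [U' [sU' U'0 scaleU']]]] :=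
  lt_scale (c := c0) (x := 0) lin_sigma sU ltac:(by rewrite scaler0).
by apply: net_eventually_mono (net_eventually_and (cc0 d d0) (x0 U' sU' U'0)) => p [];
  apply: scaleU'.
Qed.

End Nets.

Lemma distr_invr1 (R : realFieldType) (x : R) :
  `|x - 1| < 2^-1 -> `|x^-1 - 1| <= 2 * `|x - 1|.
Proof.
move=> x_near1; have x_gt : 2^-1 < x.
  move: x_near1; rewrite ltr_distl => /andP[+ _].
  by rewrite ltrBlDr -[X in X + _]mul1r; lra.
have x0 : 0 < x by apply: lt_trans x_gt; rewrite invr_gt0.
have -> : x^-1 - 1 = (1 - x) / x by rewrite mulrBl mul1r divff ?gt_eqF.
rewrite normrM normfV (gtr0_norm x0) ler_pdivrMr // distrC.
have : 0 <= `|x - 1| by [].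
by move: x_gt; rewrite -[X in X < _]mul1r; nra.
Qed.

Section UnitDirection.
Variables (R : realType) (V : normedModType R).

(* [e0] is an arbitrary unit vector, so that [unit_dir e0] maps into the unit
   sphere even at [0]. *)
Definition unit_dir (e0 x : V) : V := if x == 0 then e0 else `|x|^-1 *: x.

Lemma normr_normalize (x : V) : x != 0 -> `| `|x|^-1 *: x| = 1.
Proof. by move=> x0; rewrite normrZ ger0_norm ?invr_ge0 // mulVf // normr_eq0. Qed.

Lemma normr_unit_dir e0 x : `|e0| = 1 -> `|unit_dir e0 x| = 1.
Proof. by rewrite /unit_dir; case: eqP => // /eqP /normr_normalize. Qed.

Lemma distr_normalize (x : V) : x != 0 -> `|x - `|x|^-1 *: x| = `| `|x| - 1|.
Proof.
move=> x0; rewrite -{1}(scale1r x) -scalerBl normrZ -[X in _ * X]normr_id.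
by rewrite -normrM mulrBl mul1r mulVf ?normr_eq0 // distrC.
Qed.

End UnitDirection.

Section IsometricImage.
Variables (R : realType) (E F : normedModType R) (j : E -> F).
Hypothesis j_add : forall x y, j (x + y) = j x + j y.
Hypothesis j_scale : forall (c : R) x, j (c *: x) = c *: j x.
Hypothesis j_norm : forall x, `|j x| = `|x|.

Lemma dist_norm1_le (u : F) y : `|u| = 1 -> `| `|y| - 1 | <= `|u - j y|.
Proof. by move=> u1; rewrite -u1 -j_norm distrC ler_dist_dist. Qed.

Lemma neq0_dist_norm1 (u : F) y : `|u| = 1 -> `|u - j y| < 1 -> y != 0.
Proof.
move=> u1 uy1; apply/eqP => y0; have := le_lt_trans (dist_norm1_le y u1) uy1.
by rewrite y0 normr0 sub0r normrN normr1 ltxx.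
Qed.

Lemma dist_unit_dir_le e0 (u : F) y : `|u| = 1 -> `|u - j y| < 1 ->
  `|u - j (unit_dir e0 y)| <= 2 * `|u - j y|.
Proof.
move=> u1 uy1; have y0 := neq0_dist_norm1 u1 uy1.
have y_near1 := dist_norm1_le y u1.
rewrite /unit_dir (negbTE y0) -[u - _](subrKA (j y)).
rewrite (le_trans (ler_normD _ _)) // (isometry_dist j_add j_scale j_norm).
by rewrite distr_normalize // mulr2n mulrDl mul1r lerD2l.
Qed.

Variables (P : Type) (le : P -> P -> Prop) (f : P -> F) (y : P -> E).
Hypothesis le_directed : directed le.
Hypothesis f1 : forall p, `|f p| = 1.
Hypothesis f_near_y : net_norm_null le (fun p => f p - j (y p)).

Lemma exists_norm1 : exists e0 : E, `|e0| = 1.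
Proof.
have [p1 yp1] := f_near_y ltr01.
exists (`|y p1|^-1 *: y p1); apply/normr_normalize/(neq0_dist_norm1 (f1 p1)).
exact/yp1/le_directed.1.
Qed.

Lemma net_null_unit_dir (pi : set (set E)) e0 : linear_topology pi -> net_null pi le y ->
  net_null pi le (fun p => unit_dir e0 (y p)).
Proof.
move=> pi_linear y0.
apply: (net_null_eq le_directed (x := fun p => `|y p|^-1 *: y p)).
  apply: net_eventually_mono (f_near_y ltr01) => p /(neq0_dist_norm1 (f1 p)).
  by rewrite /unit_dir => /negbTE ->.
apply: (net_null_scale le_directed (c0 := 1)) y0 => // d d0.
have d2 : 0 < Num.min 2^-1 (d / 2) by rewrite lt_min invr_gt0 divr_gt0 ?andbT.
apply: net_eventually_mono (f_near_y d2) => p; rewrite lt_min => /andP[fy_small fy_d].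
have y_near1 := le_lt_trans (dist_norm1_le (y p) (f1 p)) fy_small.
rewrite (le_lt_trans (distr_invr1 y_near1)) // -ltr_pdivlMl // mulrC.
exact: le_lt_trans (dist_norm1_le (y p) (f1 p)) fy_d.
Qed.

End IsometricImage.

Lemma cvg_le_harmonic (R : realType) (a b : nat -> R) :
  (forall n, 0 <= a n <= 2 * harmonic n + b n) -> b @ \oo --> 0 -> a @ \oo --> 0.
Proof.
move=> ab b0; apply: (squeeze_cvgr (f := cst 0) (h := fun n => 2 * harmonic n + b n)).
- exact: nearW.
- exact: cvg_cst.
rewrite -[0]addr0 -[X in X + _](mulr0 2); apply: cvgD b0.
by apply: cvgM; [exact: cvg_cst | exact: cvg_harmonic].
Qed.

Theorem mainTheorem15 (R : realType)
  (F : completeNormedModType R) (joinF : F -> F -> F)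
  (hF : is_banach_lattice joinF)
  (tau : set (set F)) (htau : linear_topology tau)
  (tau_weak : forall U, tau U -> open U)
  (E : completeNormedModType R) (joinE : E -> E -> E)
  (hE : is_banach_lattice joinE)
  (j : E -> F)
  (j_add : forall x y, j (x + y) = j x + j y)
  (j_scale : forall (c : R) x, j (c *: x) = c *: j x)
  (j_join : forall x y, j (joinE x y) = joinF (j x) (j y))
  (j_norm : forall x, `|j x| = `|x|)
  (pi : set (set E)) (hpi : linear_topology pi)
  (hKP : KP_property joinE pi)
  (T : F -> E)
  (T_add : forall x y, T (x + y) = T x + T y)
  (T_scale : forall (c : R) x, T (c *: x) = c *: T x)
  (T_cont : forall V, pi V -> tau (T @^-1` V))
  (IT_cont : forall W : set F, open W -> tau ((fun x => x - j (T x)) @^-1` W)) :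
  KP_property joinF tau.
Proof.
move=> P le f le_dir f1 f0 q; case: (le_dir) => _ [leP_trans leP_ub].
pose y := T \o f; pose N p := f p - j (y p).
have N0 : net_norm_null le N.
  apply: (net_null_norm_null (S := fun x => x - j (T x))) f0 => //.
  by rewrite (scalable0 T_scale) (scalable0 j_scale) subr0.
have y0 : net_null pi le y by apply: net_null_comp f0; rewrite // (scalable0 T_scale).
have [e0 e01] := exists_norm1 j_norm le_dir f1 N0.
pose g p := unit_dir e0 (y p).
have g0 : net_null pi le g := net_null_unit_dir j_norm le_dir f1 N0 e0 hpi y0.
have [pn hpn] := choice (fun n => N0 _ (harmonic_gt0 n)).
have [q' hq'] := choice (fun n => leP_ub (q n) (pn n)).
have [p' [q'p' [gE [gE_disj gE_near]]]] :=
  hKP P le g le_dir (fun p => normr_unit_dir _ e01) g0 q'.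
exists p'; split; first by move=> n; exact: leP_trans (hq' n).1 (q'p' n).
exists (j \o gE); split; first exact: disjoint_seq_comp.
apply: cvg_le_harmonic gE_near => n; rewrite normr_ge0 /=.
have Np'n : `|N (p' n)| < harmonic n := hpn n _ (leP_trans _ _ _ (hq' n).2 (q'p' n)).
have Np'n1 : `|N (p' n)| < 1.
  by apply: lt_le_trans Np'n _; rewrite invf_le1 ?ltr0n // ler1n.
rewrite -[f _ - _](subrKA (j (g (p' n)))) (le_trans (ler_normD _ _)) //.
rewrite (isometry_dist j_add j_scale j_norm) lerD2r.
apply: le_trans (dist_unit_dir_le j_add j_scale j_norm e0 (f1 (p' n)) Np'n1) _.
by rewrite ler_pM2l // ltW.
Qed.
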